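(* Let $(\beta,\gamma)$ be antiferromagnetic and $\lambda>0$. Let $x^*>0$ be the unique positive solution of $x^*=\frac{1+\gamma\lambda(x^* )^2}{\beta+\lambda(x^* )^2}$, let $\omega(R)=\frac{1+\beta\gamma-\beta R-\gamma/R}{1-\beta\gamma}$ and $\omega^*=\omega(x^* )$. For $\tau>0$ let $I'_\tau=\big[x^*-2\tau\frac{|\omega^*|}{1-|\omega^*|},\,x^*+2\tau\frac{|\omega^*|}{1-|\omega^*|}\big]$, and for $R'>0$ let $\phi_{R'}(R)=\frac{1+\gamma\lambda RR'}{\beta+\lambda RR'}$. There exist constants $0<C_{\min}<C_{\max}<1$ and $\tau_0>0$ such that for all $\tau\in(0,\tau_0)$, all $R\in I'_\tau$ and all $R'\in[x^*-\tau,x^*+\tau]$: $$C_{\min}\leq|\phi_{R'}'(R)|\leq C_{\max},\qquad \omega(R)\leq C_{\max},\qquad \phi_{R'}(R)\in I'_\tau,$$ where $\phi_{R'}'$ denotes the derivative with respect to $R$.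
   Context: A pair $(\beta,\gamma)$ with $\beta,\gamma\geq0$ is antiferromagnetic if $\beta\gamma\in[0,1)$ and at least one is nonzero. *)

From Stdlib Require Import Reals.
From Coquelicot Require Import Coquelicot.
Open Scope R_scope.

Definition antiferromagnetic (beta gamma : R) : Prop :=
  0 <= beta /\ 0 <= gamma /\ beta * gamma < 1 /\ (beta <> 0 \/ gamma <> 0).

Definition omega (beta gamma r : R) : R :=
  (1 + beta * gamma - beta * r - gamma / r) / (1 - beta * gamma).

Definition phi (beta gamma lambda r' r : R) : R :=
  (1 + gamma * lambda * r * r') / (beta + lambda * r * r').

Definition Iprime (xs ws tau r : R) : Prop :=
  xs - 2 * tau * (Rabs ws / (1 - Rabs ws)) <= r <=
  xs + 2 * tau * (Rabs ws / (1 - Rabs ws)).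

From Stdlib Require Import Reals Lra.
From Coquelicot Require Import Coquelicot.
Open Scope R_scope.

(* Write c = (1 - beta gamma) lambda, V = beta + lambda R R', D = beta + lambda xs^2 and
   w = omega(xs).  The slope |d phi_R'/dR| = c R' / V^2 equals w = c xs / D^2 at R = R' = xs,
   and omega(R) < 1 for every R > 0 because (1 - omega(R)) R (1 - beta gamma) equals
   beta (R - gamma)^2 + gamma (1 - beta gamma) > 0.  By continuity, Cmin = w / 2 and
   Cmax = (1 + w) / 2 work near (xs, xs).
   The interval I'_tau has half-width K tau with K = 2 w / (1 - w).  Since
   phi_R'(R) - xs = c (xs^2 - R R') / (V D) and |xs^2 - R R'| <= tau (K xs + R), the point
   phi_R'(R) stays in I'_tau as long as c (K xs + R) <= K V D; at R = R' = xs this reads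
   w (K + 1) < K, which holds because w < 1, and it persists nearby. *)

Lemma Iprime_iff (xs ws tau r : R) :
  Iprime xs ws tau r <-> Rabs (r - xs) <= 2 * (Rabs ws / (1 - Rabs ws)) * tau.
Proof.
unfold Iprime. rewrite Rabs_le_between'.
replace (2 * (Rabs ws / (1 - Rabs ws)) * tau) with (2 * tau * (Rabs ws / (1 - Rabs ws)))
  by ring.
tauto.
Qed.

Lemma phi_denominator_pos (beta lambda r' r : R) :
  0 <= beta -> 0 < lambda -> 0 < r -> 0 < r' -> 0 < beta + lambda * r * r'.
Proof.
intros Hb Hl Hr Hr'.
assert (0 < lambda * r * r') by (repeat apply Rmult_lt_0_compat; assumption).
lra.
Qed.

Lemma Derive_phi (beta gamma lambda r' r : R) :
  beta + lambda * r * r' <> 0 ->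
  Derive (fun z => phi beta gamma lambda r' z) r =
  - ((1 - beta * gamma) * lambda * r' / (beta + lambda * r * r') ^ 2).
Proof.
intros Hden. apply is_derive_unique. unfold phi.
auto_derive; [exact Hden|]. field. exact Hden.
Qed.

Lemma phi_sub_phi (beta gamma lambda r' r s' s : R) :
  beta + lambda * r * r' <> 0 -> beta + lambda * s * s' <> 0 ->
  phi beta gamma lambda r' r - phi beta gamma lambda s' s =
  (1 - beta * gamma) * lambda * (s * s' - r * r') /
  ((beta + lambda * r * r') * (beta + lambda * s * s')).
Proof. intros Hr Hs. unfold phi. field. split; assumption. Qed.

Lemma omega_lt_1 (beta gamma r : R) :
  antiferromagnetic beta gamma -> 0 < r -> omega beta gamma r < 1.
Proof.
intros (Hb & Hg & Hbg & Hne) Hr.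
assert (Hpos : 0 < beta * (r - gamma) ^ 2 + gamma * (1 - beta * gamma)).
{ destruct (Req_dec gamma 0) as [Hg0 | Hg0].
  - destruct Hne as [Hb0 | Hg0']; [|contradiction].
    subst gamma. assert (0 < beta * r ^ 2) by (apply Rmult_lt_0_compat; nra). nra.
  - assert (0 <= beta * (r - gamma) ^ 2) by (apply Rmult_le_pos; [lra | apply pow2_ge_0]).
    assert (0 < gamma * (1 - beta * gamma)) by (apply Rmult_lt_0_compat; lra). lra. }
unfold omega. apply Rlt_div_l; [lra|].
replace (1 + beta * gamma - beta * r - gamma / r) with
  (1 - beta * gamma - (beta * (r - gamma) ^ 2 + gamma * (1 - beta * gamma)) / r)
  by (field; lra).
assert (0 < (beta * (r - gamma) ^ 2 + gamma * (1 - beta * gamma)) / r)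
  by (apply Rdiv_lt_0_compat; assumption).
lra.
Qed.

Lemma locally_2d_lt (f g : R -> R -> R) (x y : R) :
  continuity_2d_pt f x y -> continuity_2d_pt g x y -> f x y < g x y ->
  locally_2d (fun u v => f u v < g u v) x y.
Proof.
intros Hf Hg Hlt.
assert (Heps : 0 < g x y - f x y) by lra.
apply locally_2d_impl with
  (P := fun u v => Rabs ((g u v - f u v) - (g x y - f x y)) < g x y - f x y).
- apply locally_2d_forall. intros u v Huv. apply Rabs_def2 in Huv. lra.
- exact (continuity_2d_pt_minus g f x y Hg Hf (mkposreal _ Heps)).
Qed.

Ltac continuity_2d :=
  repeat first
    [ apply continuity_2d_pt_const | apply continuity_2d_pt_id1
    | apply continuity_2d_pt_id2 | apply continuity_2d_pt_plus
    | apply continuity_2d_pt_minus | apply continuity_2d_pt_opp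
    | apply continuity_2d_pt_mult | apply continuity_2d_pt_inv ].

Section FixedPoint.

Variables beta gamma lambda xs : R.
Hypothesis Haf : antiferromagnetic beta gamma.
Hypothesis Hlambda : 0 < lambda.
Hypothesis Hxs : 0 < xs.
Hypothesis Hfixed : phi beta gamma lambda xs xs = xs.

Lemma omega_fixed :
  omega beta gamma xs = (1 - beta * gamma) * lambda * xs / (beta + lambda * xs * xs) ^ 2.
Proof.
destruct Haf as (Hb & Hg & Hbg & _).
pose proof (phi_denominator_pos beta lambda xs xs Hb Hlambda Hxs Hxs) as HD.
set (D := beta + lambda * xs * xs) in *.
assert (HxD : xs * D = 1 + gamma * lambda * xs * xs).
{ rewrite <- Hfixed at 1. unfold phi. fold D. field. lra. }
assert (Hgap : D * (xs - gamma) = 1 - beta * gamma) by (unfold D in *; nra).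
assert (Hnum : lambda * xs * xs * (xs - gamma) = 1 - beta * xs) by (unfold D in *; nra).
assert (Hxg : xs - gamma <> 0) by (intro E; rewrite E in Hgap; lra).
unfold omega.
replace (1 + beta * gamma - beta * xs - gamma / xs) with ((1 - beta * xs) * (xs - gamma) / xs)
  by (field; lra).
rewrite <- Hnum, <- Hgap. field. repeat split; lra.
Qed.

Lemma omega_fixed_pos : 0 < omega beta gamma xs.
Proof.
destruct Haf as (Hb & _ & Hbg & _).
pose proof (phi_denominator_pos beta lambda xs xs Hb Hlambda Hxs Hxs) as HD.
rewrite omega_fixed. apply Rdiv_lt_0_compat.
- apply Rmult_lt_0_compat; [apply Rmult_lt_0_compat|]; lra.
- apply pow_lt. exact HD.
Qed.

Lemma phi_fixed_dist_le (K tau r r' : R) :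
  0 < r -> 0 < r' -> 0 <= tau ->
  Rabs (r - xs) <= K * tau -> Rabs (r' - xs) <= tau ->
  (1 - beta * gamma) * lambda * (K * xs + r) <=
    K * ((beta + lambda * r * r') * (beta + lambda * xs * xs)) ->
  Rabs (phi beta gamma lambda r' r - xs) <= K * tau.
Proof.
intros Hr Hr' Htau HrK Hr'tau Hratio.
destruct Haf as (Hb & _ & Hbg & _).
pose proof (phi_denominator_pos beta lambda r' r Hb Hlambda Hr Hr') as HV.
pose proof (phi_denominator_pos beta lambda xs xs Hb Hlambda Hxs Hxs) as HD.
assert (Hc : 0 < (1 - beta * gamma) * lambda) by (apply Rmult_lt_0_compat; lra).
assert (Hprod : Rabs (xs * xs - r * r') <= tau * (K * xs + r)).
{ replace (xs * xs - r * r') with (- (xs * (r - xs) + r * (r' - xs))) by ring.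
  rewrite Rabs_Ropp. eapply Rle_trans; [apply Rabs_triang|].
  rewrite !Rabs_mult, (Rabs_pos_eq xs), (Rabs_pos_eq r) by lra. nra. }
rewrite <- Hfixed, phi_sub_phi by lra.
set (c := (1 - beta * gamma) * lambda) in *.
set (V := beta + lambda * r * r') in *.
set (D := beta + lambda * xs * xs) in *.
assert (HVD : 0 < V * D) by (apply Rmult_lt_0_compat; assumption).
rewrite Rabs_div, Rabs_mult, (Rabs_pos_eq c), (Rabs_pos_eq (V * D)) by lra.
apply Rle_div_l; [exact HVD|].
apply Rle_trans with (c * (tau * (K * xs + r))).
- apply Rmult_le_compat_l; lra.
- nra.
Qed.

Lemma near_fixed_point (K : R) :
  omega beta gamma xs * (K + 1) < K ->
  locally_2d (fun r r' =>
    0 < r /\ 0 < r' /\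
    omega beta gamma xs / 2 <
      (1 - beta * gamma) * lambda * r' / (beta + lambda * r * r') ^ 2 <
      (1 + omega beta gamma xs) / 2 /\
    omega beta gamma r < (1 + omega beta gamma xs) / 2 /\
    (1 - beta * gamma) * lambda * (K * xs + r) <
      K * ((beta + lambda * r * r') * (beta + lambda * xs * xs))) xs xs.
Proof.
intros HK.
pose proof omega_fixed_pos as Hw0.
pose proof (omega_lt_1 beta gamma xs Haf Hxs) as Hw1.
destruct Haf as (Hb & _ & Hbg & _).
pose proof (phi_denominator_pos beta lambda xs xs Hb Hlambda Hxs Hxs) as HD.
pose proof omega_fixed as Hslope.
assert (Hratio : (1 - beta * gamma) * lambda * (K * xs + xs) <
                 K * ((beta + lambda * xs * xs) * (beta + lambda * xs * xs))).
{ rewrite Hslope in HK.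
  replace ((1 - beta * gamma) * lambda * (K * xs + xs)) with
    ((1 - beta * gamma) * lambda * xs / (beta + lambda * xs * xs) ^ 2 * (K + 1) *
     ((beta + lambda * xs * xs) * (beta + lambda * xs * xs))) by (field; lra).
  apply Rmult_lt_compat_r; [nra | exact HK]. }
(* Each conjunct is a strict inequality between functions continuous at (xs, xs);
   at that point the slope is omega xs by [omega_fixed], and the last one is [Hratio]. *)
repeat apply locally_2d_and; apply locally_2d_lt; cbv beta;
  try match goal with |- continuity_2d_pt _ _ _ => unfold omega; continuity_2d end;
  rewrite <- ?Hslope; try apply pow_nonzero; lra.
Qed.

End FixedPoint.

Theorem lemma3p3 (beta gamma lambda xs : R) :
  antiferromagnetic beta gamma -> 0 < lambda ->
  0 < xs -> xs = (1 + gamma * lambda * xs ^ 2) / (beta + lambda * xs ^ 2) ->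
  exists Cmin Cmax tau0 : R,
    0 < Cmin /\ Cmin < Cmax /\ Cmax < 1 /\ 0 < tau0 /\
    forall tau r r' : R,
      0 < tau -> tau < tau0 ->
      Iprime xs (omega beta gamma xs) tau r ->
      xs - tau <= r' <= xs + tau ->
      Cmin <= Rabs (Derive (fun z => phi beta gamma lambda r' z) r) <= Cmax /\
      omega beta gamma r <= Cmax /\
      Iprime xs (omega beta gamma xs) tau (phi beta gamma lambda r' r).
Proof.
intros Haf Hlambda Hxs Hfix.
assert (Hfixed : phi beta gamma lambda xs xs = xs).
{ unfold phi. rewrite Hfix at 5. f_equal; ring. }
pose proof (omega_fixed_pos beta gamma lambda xs Haf Hlambda Hxs Hfixed) as Hw0.
pose proof (omega_lt_1 beta gamma xs Haf Hxs) as Hw1.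
set (w := omega beta gamma xs) in *.
set (K := 2 * (w / (1 - w))).
assert (HK0 : 0 < K) by (apply Rmult_lt_0_compat; [lra | apply Rdiv_lt_0_compat; lra]).
assert (HK : w * (K + 1) < K).
{ assert (K * (1 - w) = 2 * w) by (unfold K; field; lra). nra. }
destruct (near_fixed_point beta gamma lambda xs Haf Hlambda Hxs Hfixed K HK) as [delta Hnear].
fold w in Hnear.
exists (w / 2), ((1 + w) / 2), (delta / (K + 1)).
split; [lra|]. split; [lra|]. split; [lra|].
split; [apply Rdiv_lt_0_compat; [apply cond_pos | lra] |].
intros tau r r' Htau Htau0 Hr Hr'.
rewrite Iprime_iff, (Rabs_pos_eq w) in Hr |- * by lra. fold K in Hr |- *.
apply Rabs_le_between' in Hr'.
assert (Hdelta : (K + 1) * tau < delta).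
{ apply Rlt_div_r in Htau0; lra. }
destruct (Hnear r r') as (Hr0 & Hr'0 & Hslope & Homega & Hratio); [nra .. |].
assert (HV : 0 < beta + lambda * r * r')
  by (apply phi_denominator_pos; [apply Haf | assumption ..]).
rewrite Derive_phi, Rabs_Ropp, Rabs_pos_eq by lra.
split; [split; lra|]. split; [lra|].
apply (phi_fixed_dist_le beta gamma lambda xs Haf Hlambda Hxs Hfixed); lra.
Qed.
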